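(* Let $q\ge 2$ and $n\ge 2$ be integers, with $n\ge 3$ if $q=2$. Then $\chi(H_q(n,2))=q^{n-1}$, and every proper $q^{n-1}$-coloring of $H_q(n,2)$ is even.
   Context: $\mathbb{Z}_q=\mathbb{Z}/q\mathbb{Z}$; for $x,y\in\mathbb{Z}_q^n$, $\mathrm{d}(x,y)=|\{i: x_i\neq y_i\}|$ is the Hamming distance. $H_q(n,d)$ is the simple undirected graph with vertex set $\mathbb{Z}_q^n$ in which $x,y$ are adjacent iff $\mathrm{d}(x,y)\ge d$. $\chi$ denotes the chromatic number. A coloring is called even if all its color classes have the same cardinality. *)

From mathcomp Require Import all_boot.
Set Implicit Arguments. Unset Strict Implicit. Unset Printing Implicit Defensive.

(* Vertices of H_q(n,d): words of length n over Z_q, modelled as 'I_q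
   (only equality of coordinates matters for Hamming distance). *)
Definition word (q n : nat) := {ffun 'I_n -> 'I_q}.

Definition hdist (q n : nat) (x y : word q n) : nat := #|[set i | x i != y i]|.

(* adjacency of H_q(n,d): x ~ y iff d(x,y) >= d  (simple graph: d >= 1 gives
   irreflexivity; for d = 2 this is automatic) *)
Definition Hadj (q n d : nat) (x y : word q n) : bool := (d <= hdist x y) && (x != y).

Definition proper_coloring (T : finType) (e : rel T) (k : nat) (c : T -> 'I_k) : Prop :=
  forall x y, e x y -> c x != c y.

Definition colorable (T : finType) (e : rel T) (k : nat) : Prop :=
  exists c : T -> 'I_k, proper_coloring e c.

Definition is_chromatic_number (T : finType) (e : rel T) (k : nat) : Prop :=
  colorable e k /\ forall m, colorable e m -> k <= m.

Definition even_coloring (T : finType) (k : nat) (c : T -> 'I_k) : Prop :=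
  forall a b : 'I_k, #|[set x | c x == a]| = #|[set x | c x == b]|.

From mathcomp Require Import all_boot.

Set Implicit Arguments.
Unset Strict Implicit.
Unset Printing Implicit Defensive.

(* An independent set of H_q(n,2) is a set of words at pairwise distance at
   most 1. Two distinct such words differ in a single coordinate i, and every
   further word of the set agrees with them off i, so the set injects into
   'I_q via its i-th coordinate. Hence every colour class has at most q
   elements, at least q^n / q = q^(n-1) colours are needed, and a proper
   q^(n-1)-colouring must have all its classes of size exactly q. Colouring a
   word by its first n-1 coordinates attains the bound. *)

Section ColourClasses.
Variables (T : finType) (k m : nat).
Implicit Type c : T -> 'I_k.

Lemma sum_card_colour_classes c : \sum_(a < k) #|[set x | c x == a]| = #|T|.
Proof.
rewrite -sum1_card (partition_big c xpredT) //=.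
by apply: eq_bigr => a _; rewrite -sum1_card; apply: eq_bigl => x; rewrite inE.
Qed.

Lemma card_le_colours_mul c :
  (forall a, #|[set x | c x == a]| <= m) -> #|T| <= k * m.
Proof.
move=> class_le.
rewrite -(sum_card_colour_classes c) -[k in k * m]card_ord -sum_nat_const.
exact: leq_sum.
Qed.

Lemma colour_class_card_eq c :
    (forall a, #|[set x | c x == a]| <= m) -> #|T| = k * m ->
  forall a, #|[set x | c x == a]| = m.
Proof.
move=> class_le.
rewrite -(sum_card_colour_classes c) -[k in k * m]card_ord -sum_nat_const.
move/eqP; rewrite (leqif_sum (fun a _ => leqif_eq (class_le a))) => /forallP eq_m a.
exact/eqP/eq_m.
Qed.

End ColourClasses.

Lemma card_word q n : #|word q n| = q ^ n.
Proof. by rewrite card_ffun !card_ord. Qed.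

Section HammingIndependentSets.
Variables q n : nat.
Implicit Types x y z : word q n.

Lemma hdist_le1_eq_off x y i j : hdist x y <= 1 -> x i != y i -> j != i -> x j = y j.
Proof.
move=> le1 xyi nji; apply/eqP; apply: contraTT le1 => xyj.
rewrite -ltnNge /hdist; apply: leq_trans (subset_leq_card (_ : [set i; j] \subset _)).
  by rewrite cards2 eq_sym nji.
by apply/subsetP=> l; rewrite !inE => /orP[] /eqP->.
Qed.

Lemma hdist_lt_of_not_Hadj d x y : 0 < d -> ~~ Hadj d x y -> hdist x y < d.
Proof.
rewrite /Hadj negb_and -ltnNge negbK => d_gt0 /orP[//|/eqP->].
suff -> : hdist y y = 0 by [].
rewrite /hdist; apply/eqP; rewrite cards_eq0; apply/eqP/setP=> l.
by rewrite !inE eqxx.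
Qed.

Lemma card_hdist_le1 (A : {set word q n}) :
  0 < q -> {in A &, forall x y, hdist x y <= 1} -> #|A| <= q.
Proof.
move=> q_gt0 hA; have [|/card_gt1P[x [y [xA yA nxy]]]] := leqP #|A| 1.
  by move/leq_trans; apply.
have [i xyi] : exists i, x i != y i.
  apply/existsP; apply: contraNT nxy; rewrite negb_exists => /forallP xy.
  by apply/eqP/ffunP=> l; apply/eqP; rewrite -[_ == _]negbK.
have agree z j : z \in A -> j != i -> z j = x j.
  move=> zA nji; apply/eqP; rewrite eq_sym; apply/negPn/negP => xzj.
  have xzi : x i = z i by apply: hdist_le1_eq_off (hA _ _ xA zA) xzj _; rewrite eq_sym.
  have xyj := hdist_le1_eq_off (hA _ _ xA yA) xyi nji.
  have yzi : y i != z i by rewrite -xzi eq_sym.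
  by move: xzj; rewrite xyj (hdist_le1_eq_off (hA _ _ yA zA) yzi nji) eqxx.
rewrite -(@card_in_imset _ _ (fun z : word q n => z i)).
  by rewrite (leq_trans (max_card _)) ?card_ord.
move=> z w zA wA /= zwi; apply/ffunP=> j.
by have [->//|nji] := eqVneq j i; rewrite !agree.
Qed.

Lemma colour_class_card_le k (c : word q n -> 'I_k) a :
  0 < q -> proper_coloring (@Hadj q n 2) c -> #|[set x | c x == a]| <= q.
Proof.
move=> q_gt0 c_proper; apply: card_hdist_le1 => // x y.
rewrite !inE => /eqP cx /eqP cy; rewrite -ltnS; apply: hdist_lt_of_not_Hadj => //.
by apply: contraTN (eqxx a) => /c_proper; rewrite cx cy.
Qed.

Lemma colorable_Hadj2_prefix : colorable (@Hadj q n 2) (q ^ n.-1).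
Proof.
pose prefix x : word q n.-1 := [ffun j => x (widen_ord (leq_pred n) j)].
exists (fun x => cast_ord (card_word q n.-1) (enum_rank (prefix x))) => x y.
apply: contraTN => /eqP/cast_ord_inj/enum_rank_inj prefix_xy.
rewrite /Hadj negb_and -ltnNge; apply/orP; left.
have last_coord (i : 'I_n) : x i != y i -> val i = n.-1.
  move=> xyi; apply/eqP; rewrite eqn_leq -ltnS (leq_trans (ltn_ord i) (leqSpred n)) /= leqNgt.
  apply: contraNN xyi => lt_i.
  have := congr1 (fun f : word q n.-1 => f (Ordinal lt_i)) prefix_xy.
  rewrite !ffunE (_ : widen_ord _ _ = i) => [/eqP //|]; exact: val_inj.
apply/card_le1P => i; rewrite inE => xyi j; rewrite inE.
apply/idP/idP => [xyj|/eqP->//]; apply/eqP/val_inj.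
by rewrite (last_coord _ xyi) (last_coord _ xyj).
Qed.

End HammingIndependentSets.

Theorem proposition3p6 (q n : nat) :
  2 <= q -> 2 <= n -> (q = 2 -> 3 <= n) ->
  is_chromatic_number (@Hadj q n 2) (q ^ n.-1) /\
  (forall c : word q n -> 'I_(q ^ n.-1),
      proper_coloring (@Hadj q n 2) c -> even_coloring c).
Proof.
move=> q_ge2 n_ge2 _.
have q_gt0 : 0 < q by apply: leq_trans q_ge2.
have card_words : #|word q n| = q ^ n.-1 * q.
  by rewrite card_word -expnSr prednK // (leq_trans _ n_ge2).
split; first split.
- exact: colorable_Hadj2_prefix.
- move=> m [c c_proper]; rewrite -(leq_pmul2r q_gt0) -card_words.
  by apply: (card_le_colours_mul (c := c)) => a; apply: colour_class_card_le.
- move=> c c_proper a b.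
  have class_le a' : #|[set x | c x == a']| <= q by apply: colour_class_card_le.
  by rewrite !(colour_class_card_eq class_le card_words).
Qed.
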